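(* Let $M\in\mathrm{Mat}(d,\mathbb{Z})$ act by $x\mapsto Mx\bmod n$ on $\tilde L_n=(\mathbb{Z}/n\mathbb{Z})^d$, and let $m\ge 0$ be the height of the pretail tree of the fixed point $0$. Then the following are equivalent: (i) all maximal pretails of $0$ have the same length $m$; (ii) $v_i=w_i\neq 0$ for all $0\le i<m$ and $w_i=0$ for all $i\ge m$; (iii) $|\ker(M^{i+1})| = |\ker(M)|\,|\ker(M^i)| = |\ker(M)|^{i+1}$ for all $0\le i<m$, and $|\ker(M^{m+j})|=|\ker(M^m)|$ for all $j\ge 0$. Moreover, $m$ is the smallest integer $m\ge0$ for which there exists $k\ge1$ with $M^{k+m}\equiv M^m\pmod n$, i.e. the maximum of all pretail lengths.
   Context: A point $y$ is periodic if $M^ky\equiv y\pmod n$ for some $k\ge1$. A pretail of a periodic point $y$ is a set $\{x,Mx,\dots,M^jx=y\}$ (mod $n$) in which $y$ is the only periodic point; $j$ is its length. A pretail of $0$ is maximal if it is not contained in any longer pretail of $0$. The pretail tree of $0$ is the rooted tree with root $0$ whose vertices are all points of all pretails of $0$, where $x\ne 0$ is a child of $Mx$. $\ker(M^j)=\{x\in\tilde L_n: M^jx\equiv 0\}$. $v_i$ is the number of vertices of the tree at graph distance $i$ from the root. For $i\ge1$, $w_i$ is the number of vertices at distance $i$ from the root that are not leaves (terminal vertices); $w_0=0$ if the tree is trivial (only the root) and $w_0=1$ otherwise. *)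

From HB Require Import structures.
From mathcomp Require Import all_boot all_order all_algebra.
From mathcomp Require Import boolp.
Unset Printing Implicit Defensive.
Import Order.TTheory GRing.Theory Num.Theory.
Local Open Scope ring_scope.

Definition Lat (n d : nat) := 'cV['Z_n]_d.

Definition redmx (n : nat) {d : nat} (A : 'M[int]_d) : 'M['Z_n]_d :=
  map_mx (fun z : int => z%:~R) A.

Definition act (n : nat) {d : nat} (M : 'M[int]_d) (x : Lat n d) : Lat n d :=
  redmx n M *m x.

Notation Mit n M k x := (iter k (act n M) x).

Definition periodic (n : nat) {d : nat} (M : 'M[int]_d) (y : Lat n d) : Prop :=
  exists k, (0 < k)%N /\ Mit n M k y = y.

Definition pretail (n : nat) {d : nat} (M : 'M[int]_d) (x : Lat n d) (j : nat)
  (y : Lat n d) : Prop :=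
  [/\ periodic n M y, Mit n M j x = y &
      forall i, (i < j)%N -> ~ periodic n M (Mit n M i x)].

Definition pretail_set (n : nat) {d : nat} (M : 'M[int]_d) (x : Lat n d) (j : nat)
  : {set Lat n d} := [set Mit n M (nat_of_ord i) x | i : 'I_j.+1].

Definition maximal_pretail0 (n : nat) {d : nat} (M : 'M[int]_d) (x : Lat n d)
  (j : nat) : Prop :=
  pretail n M x j 0 /\
  ~ (exists x' j', [/\ pretail n M x' j' 0, (j < j')%N &
                      pretail_set n M x j \subset pretail_set n M x' j']).

Definition in_tree (n : nat) {d : nat} (M : 'M[int]_d) (z : Lat n d) : Prop :=
  exists x j i, [/\ pretail n M x j 0, (i <= j)%N & z = Mit n M i x].

Definition child (n : nat) {d : nat} (M : 'M[int]_d) (x z : Lat n d) : Prop :=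
  [/\ in_tree n M x, in_tree n M z, x <> 0 & act n M x = z].

Definition leaf (n : nat) {d : nat} (M : 'M[int]_d) (z : Lat n d) : Prop :=
  in_tree n M z /\ ~ (exists x, child n M x z).

(* graph distance i from the root 0 in the tree (the path to the root follows
   the parent map x |-> Mx, and 0 is first reached after i steps) *)
Definition at_dist (n : nat) {d : nat} (M : 'M[int]_d) (z : Lat n d) (i : nat) : Prop :=
  [/\ in_tree n M z, Mit n M i z = 0 &
      forall i', (i' < i)%N -> Mit n M i' z <> 0].

Definition tree_v (n : nat) {d : nat} (M : 'M[int]_d) (i : nat) : nat :=
  #|[set z : Lat n d | `[< at_dist n M z i >]]|.

Definition tree_trivial (n : nat) {d : nat} (M : 'M[int]_d) : Prop :=
  #|[set z : Lat n d | `[< in_tree n M z >]]| = 1%N.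

Definition tree_w (n : nat) {d : nat} (M : 'M[int]_d) (i : nat) : nat :=
  if i == 0%N then (if `[< tree_trivial n M >] then 0%N else 1%N)
  else #|[set z : Lat n d | `[< at_dist n M z i /\ ~ leaf n M z >]]|.

Definition tree_height (n : nat) {d : nat} (M : 'M[int]_d) (m : nat) : Prop :=
  (exists z, at_dist n M z m) /\ (forall z i, at_dist n M z i -> (i <= m)%N).

Definition kerM (n : nat) {d : nat} (M : 'M[int]_d) (j : nat) : {set Lat n d} :=
  [set x : Lat n d | redmx n (M ^+ j) *m x == 0].

Definition mx_congr (n : nat) {d : nat} (A B : 'M[int]_d) : Prop :=
  forall i j, (n%:Z %| A i j - B i j)%Z.

(* The maps [M^k] are linear, so the vertices of the pretail tree of 0 form the
   union of the kernels [ker M^k]; this union is [ker M^m], and [M^m x] is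
   periodic for every [x], which pins [m] down as the least [m] with
   [M^(k+m) = M^m (mod n)] for some [k >= 1].  Each of (i), (ii), (iii) says that
   no leaf lies at depth [< m]: a leaf at depth [i < m] ends a maximal pretail of
   length [i], while a vertex with a child extends every pretail ending at it;
   [w_i] counts the non-leaves among the [v_i] vertices at depth [i]; and since
   the fibres of [M] on [ker M^(i+1)] are cosets of [ker M],
   [|ker M^(i+1)| = |ker M| |ker M^i|] exactly when [M] maps [ker M^(i+1)] onto
   [ker M^i], i.e. when every vertex at depth [<= i] has a child. *)

From HB Require Import structures.
From mathcomp Require Import all_boot all_order all_algebra.
From mathcomp Require Import boolp.
Import Order.TTheory GRing.Theory Num.Theory.
Local Open Scope ring_scope.

Lemma natr_Zp_eq0 (n k : nat) : (1 < n)%N -> ((k%:R : 'Z_n) == 0) = (n %| k)%N.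
Proof. by move=> n_gt1; rewrite -val_eqE /= val_Zp_nat. Qed.

Lemma intr_Zp_eq0 (n : nat) (z : int) :
  (1 < n)%N -> ((z%:~R : 'Z_n) == 0) = (n%:Z %| z)%Z.
Proof.
move=> n_gt1; rewrite dvdzE; case: z => k /=.
- by rewrite -pmulrn natr_Zp_eq0.
- by rewrite NegzE mulrNz oppr_eq0 -pmulrn natr_Zp_eq0.
Qed.

Lemma mx_congrE {n d : nat} (A B : 'M[int]_d) :
  (1 < n)%N -> mx_congr n A B <-> redmx n A = redmx n B.
Proof.
move=> n_gt1; split => [congrAB | /matrixP eqAB i j].
- by apply/matrixP => i j; rewrite !mxE; apply/eqP; rewrite -subr_eq0 -intrB intr_Zp_eq0.
- by have /eqP := eqAB i j; rewrite !mxE -subr_eq0 -intrB intr_Zp_eq0.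
Qed.

Lemma matrix_mulmx_ext (R : pzSemiRingType) (d : nat) (A B : 'M[R]_d) :
  (forall x : 'cV[R]_d, A *m x = B *m x) -> A = B.
Proof.
move=> eqAB; apply/matrixP => i j.
by have /matrixP/(_ i 0) := eqAB (delta_mx j 0); rewrite -!colE !mxE.
Qed.

Section PretailTree.
Context {n d : nat} {M : 'M[int]_d}.
Local Notation f := (act n M).
Local Notation it k := (iter k (act n M)).

Lemma iter_actE k x : it k x = redmx n (M ^+ k) *m x.
Proof.
elim: k => [|k IHk]; first by rewrite expr0 /redmx map_mx1 mul1mx.
by rewrite iterS IHk exprS /act /redmx map_mxM mulmxA.
Qed.

Lemma iter_mulmx_redmx k : iter k (mulmx (redmx n M)) 1%:M = redmx n (M ^+ k).
Proof.
elim: k => [|k IHk]; first by rewrite expr0 /redmx map_mx1.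
by rewrite iterS IHk exprS /redmx map_mxM.
Qed.

Lemma iter_act0 k : it k 0 = 0.
Proof. by rewrite iter_actE mulmx0. Qed.

Lemma iter_actB k x y : it k (x - y) = it k x - it k y.
Proof. by rewrite !iter_actE mulmxBr. Qed.

Lemma mem_kerM i x : (x \in kerM n M i) = (it i x == 0).
Proof. by rewrite inE iter_actE. Qed.

Lemma periodic0 : periodic n M 0.
Proof. by exists 1%N; rewrite iter_act0. Qed.

Lemma periodic_iter_eq0 {y} t : periodic n M y -> it t y = 0 -> y = 0.
Proof.
move=> [p [p_gt0 yp]] yt0.
have iter_mul_p s : it (s * p) y = y by elim: s => // s IHs; rewrite mulSn iterD IHs yp.
by rewrite -(iter_mul_p t) -(subnK (leq_pmulr t p_gt0)) iterD yt0 iter_act0.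
Qed.

Lemma pretail0P x j :
  pretail n M x j 0 <-> it j x = 0 /\ (forall i, (i < j)%N -> it i x <> 0).
Proof.
split=> [[_ xj0 xi] | [xj0 xiN0]].
- by split=> // i lt_ij xi0; apply: (xi i lt_ij); rewrite xi0; apply: periodic0.
- split=> //; first exact: periodic0.
  move=> i lt_ij /(periodic_iter_eq0 (j - i)) xi0; apply: (xiN0 i lt_ij) (xi0 _).
  by rewrite -iterD subnK // ltnW.
Qed.

Lemma at_distP z i :
  at_dist n M z i <-> it i z = 0 /\ (forall i', (i' < i)%N -> it i' z <> 0).
Proof.
split=> [[] // | zi]; split; try by case: zi.
by exists z, i, 0%N; split => //; apply/pretail0P.
Qed.

Lemma pretail0_at_dist x j : pretail n M x j 0 <-> at_dist n M x j.
Proof. by rewrite pretail0P at_distP. Qed.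

Lemma in_treeP z : in_tree n M z <-> exists k, it k z = 0.
Proof.
split=> [[x [j [i [/pretail0P[xj0 _] le_ij ->]]]] | [k zk0]].
  by exists (j - i)%N; rewrite -iterD subnK.
have zk0' : exists k, it k z == 0 by exists k; apply/eqP.
case: (ex_minnP zk0') => i /eqP zi0 min_i.
exists z, i, 0%N; split => //; apply/pretail0P; split=> // i' lt_i'i /eqP zi'0.
by have := min_i i' zi'0; rewrite leqNgt lt_i'i.
Qed.

Lemma at_dist_in_tree {z i} : at_dist n M z i -> in_tree n M z.
Proof. by case. Qed.

Lemma at_dist_iter z i k : at_dist n M z (i + k) -> at_dist n M (it k z) i.
Proof.
move=> /at_distP[z0 zN0]; apply/at_distP; rewrite -iterD; split=> // i' lt_i'i.
by rewrite -iterD; apply: zN0; rewrite ltn_add2r.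
Qed.

Lemma in_tree_at_dist {z} : in_tree n M z -> exists i, at_dist n M z i.
Proof.
move=> [x [j [i [/pretail0_at_dist xj le_ij ->]]]]; exists (j - i)%N.
by apply: at_dist_iter; rewrite subnK.
Qed.

Lemma at_dist_min {z i} k : at_dist n M z i -> it k z = 0 -> (i <= k)%N.
Proof. by move=> /at_distP[_ zN0] zk0; rewrite leqNgt; apply/negP => /zN0. Qed.

Lemma at_dist_child {u i} : u <> 0 -> at_dist n M (f u) i -> at_dist n M u i.+1.
Proof.
move=> u_neq0 /at_distP[fu0 fuN0]; apply/at_distP; split; first by rewrite iterSr.
by case=> [|i'] // lt_i'i; rewrite iterSr; apply: fuN0.
Qed.

Lemma nonleafP z :
  in_tree n M z -> ~ leaf n M z <-> exists2 u, u <> 0 & f u = z.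
Proof.
move=> tz; have child_tree u : f u = z -> in_tree n M u.
  by move: tz => /in_treeP[k zk0] fuz; apply/in_treeP; exists k.+1; rewrite iterSr fuz.
split=> [z_nonleaf | [u u_neq0 fuz] [_]].
  apply: contrapT => no_child; apply: z_nonleaf; split => // -[u [_ _ u_neq0 fuz]].
  by apply: no_child; exists u.
by apply; exists u; split => //; apply: child_tree.
Qed.

Lemma nonleaf_parent {u i} : at_dist n M u i.+1 -> ~ leaf n M (f u) /\ at_dist n M (f u) i.
Proof.
move=> ui; have fui : at_dist n M (f u) i.
  by rewrite -[f u]/(it 1 u); apply: at_dist_iter; rewrite addn1.
split=> //; apply/nonleafP; first exact: at_dist_in_tree fui.
by exists u => //; move: ui => /at_distP[_ /(_ 0%N)]; apply.
Qed.

Lemma tree_v0 : tree_v n M 0 = 1%N.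
Proof.
transitivity #|[set (0 : Lat n d)]|; last exact: cards1.
apply: eq_card => z; rewrite !inE.
by apply/asboolP/eqP => [/at_distP[] | ->] //; apply/at_distP.
Qed.

Lemma act_kerMS i : f @: kerM n M i.+1 \subset kerM n M i.
Proof. by apply/subsetP => y /imsetP[x]; rewrite !mem_kerM iterSr => ? ->. Qed.

(* The fibres of [f] on [kerM i.+1] are cosets of [kerM 1]. *)
Lemma card_kerMS i : #|kerM n M i.+1| = (#|kerM n M 1| * #|f @: kerM n M i.+1|)%N.
Proof.
rewrite -sum1_card (partition_big_imset f) /= mulnC -sum_nat_const.
apply: eq_bigr => y /imsetP[x0 x0_ker ->]; rewrite sum1dep_card.
rewrite -(card_imset (kerM n M 1) (addrI x0)); apply: eq_card => x; rewrite inE.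
apply/andP/imsetP => [[_ /eqP fx] | [k k_ker ->]].
  exists (x - x0); last by rewrite addrC subrK.
  by rewrite mem_kerM (iter_actB 1) /= fx subrr.
move: x0_ker k_ker; rewrite !mem_kerM => /eqP x0_0 /eqP /= k0.
have fD : f (x0 + k) = f x0 + f k by rewrite /act mulmxDr.
by rewrite -iterS iterSr fD k0 addr0 -iterSr x0_0 !eqxx.
Qed.

Lemma card_kerMS_imset i :
  #|kerM n M i.+1| = (#|kerM n M 1| * #|kerM n M i|)%N <-> f @: kerM n M i.+1 = kerM n M i.
Proof.
have ker1_gt0 : (0 < #|kerM n M 1|)%N.
  by apply/card_gt0P; exists 0; rewrite mem_kerM iter_act0.
split=> [card_eq | fK]; last by rewrite -fK; apply: card_kerMS.
apply/eqP; rewrite eqEcard act_kerMS /= -(leq_pmul2l ker1_gt0) -(card_kerMS i).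
exact/eq_leq/esym.
Qed.

Lemma card_kerM_expn k :
  (forall i, (i < k)%N -> #|kerM n M i.+1| = (#|kerM n M 1| * #|kerM n M i|)%N) ->
  forall i, (i <= k)%N -> #|kerM n M i| = (#|kerM n M 1| ^ i)%N.
Proof.
move=> card_kerS; elim=> [_ | i IHi lt_ik].
  rewrite expn0; transitivity #|[set (0 : Lat n d)]|; last exact: cards1.
  by apply: eq_card => x; rewrite in_set1 mem_kerM.
by rewrite expnS -IHi; [apply: card_kerS | apply: ltnW].
Qed.

Context {m : nat} (height : tree_height n M m).

Lemma at_dist_le_height {z i} : at_dist n M z i -> (i <= m)%N.
Proof. exact: height.2. Qed.

Lemma exists_at_dist i : (i <= m)%N -> exists z, at_dist n M z i.
Proof.
move=> le_im; have [z zm] := height.1.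
by exists (it (m - i) z); apply: at_dist_iter; rewrite subnKC.
Qed.

Lemma iter_height_eq0 z k : it k z = 0 -> it m z = 0.
Proof.
move=> zk0; have [|i zi] := @in_tree_at_dist z; first by apply/in_treeP; exists k.
have /at_distP[zi0 _] := zi.
by rewrite -(subnK (at_dist_le_height zi)) iterD zi0 iter_act0.
Qed.

Lemma kerM_height j : kerM n M (m + j) = kerM n M m.
Proof.
apply/setP => x; rewrite !mem_kerM; apply/eqP/eqP => [/iter_height_eq0 // | xm0].
by rewrite addnC iterD xm0 iter_act0.
Qed.

Lemma root_nonleaf : (0 < m)%N -> ~ leaf n M 0.
Proof.
move=> m_gt0; have [u u1] := exists_at_dist 1 m_gt0.
by case: (nonleaf_parent u1) => + /at_distP[/= fu0 _]; rewrite fu0.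
Qed.

(* Pigeonhole on the powers of [M] mod [n] gives [M^(i+p) = M^i]; the vector
   [M^p x - x] then lies in [ker M^i], hence in [ker M^m]. *)
Lemma eventually_periodic : exists2 k, (0 < k)%N & redmx n (M ^+ (k + m)) = redmx n (M ^+ m).
Proof.
have /trajectP[i lt_io] := looping_order (mulmx (redmx n M)) 1%:M.
rewrite !iter_mulmx_redmx -(subnK (ltnW lt_io)); set p := (_ - i)%N => Mpi.
exists p; first by rewrite subn_gt0.
apply: matrix_mulmx_ext => x; rewrite -!iter_actE addnC iterD.
apply/eqP; rewrite -subr_eq0 -iter_actB; apply/eqP/(iter_height_eq0 _ i).
by rewrite iter_actB -iterD addnC !iter_actE Mpi subrr.
Qed.

Lemma periodic_iter_height x : periodic n M (it m x).
Proof.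
have [k k_gt0 Mkm] := eventually_periodic.
by exists k; split=> //; rewrite -iterD !iter_actE Mkm.
Qed.

Lemma height_le_preperiod m' k :
  (0 < k)%N -> redmx n (M ^+ (k + m')) = redmx n (M ^+ m') -> (m <= m')%N.
Proof.
move=> k_gt0 Mkm'; rewrite leqNgt; apply/negP => lt_m'm.
have [z /at_distP[zm0 zN0]] := exists_at_dist m (leqnn m).
apply: (zN0 m' lt_m'm); apply: (periodic_iter_eq0 (m - m')).
  by exists k; split=> //; rewrite -iterD !iter_actE Mkm'.
by rewrite -iterD subnK // ltnW.
Qed.

Lemma pretail_le_height x j y : pretail n M x j y -> (j <= m)%N.
Proof.
case=> _ _ xN_periodic; rewrite leqNgt; apply/negP => lt_mj.
exact: xN_periodic lt_mj (periodic_iter_height x).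
Qed.

Lemma tree_trivialE : `[< tree_trivial n M >] = (m == 0)%N.
Proof.
apply/asboolP/eqP => [triv | m0].
  apply/eqP; rewrite eqn0Ngt; apply/negP => m_gt0.
  have [z /[dup] zm /at_distP[_ /(_ 0%N m_gt0) z_neq0]] := exists_at_dist m (leqnn m).
  have sub : [set 0; z] \subset [set z : Lat n d | `[< in_tree n M z >]].
    apply/subsetP => y; rewrite !inE => /orP[] /eqP ->; apply/asboolP.
      by apply/in_treeP; exists 0%N.
    exact: at_dist_in_tree zm.
  have := subset_leq_card sub; rewrite cards2 eq_sym (introN eqP z_neq0).
  by move: triv; rewrite /tree_trivial => ->.
rewrite /tree_trivial; transitivity #|[set (0 : Lat n d)]|; last exact: cards1.
apply: eq_card => z; rewrite !inE; apply/asboolP/eqP => [tz | ->].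
  by have /in_treeP[k /iter_height_eq0] := tz; rewrite m0.
by apply/in_treeP; exists 0%N.
Qed.

Lemma tree_w0 : tree_w n M 0 = (if m == 0 then 0 else 1)%N.
Proof. by rewrite /tree_w eqxx tree_trivialE. Qed.

Lemma tree_w_eq0 i : (m <= i)%N -> tree_w n M i = 0%N.
Proof.
case: i => [|i] le_mi; first by rewrite tree_w0; move: le_mi; rewrite leqn0 => ->.
rewrite /tree_w /=; apply/eqP; rewrite cards_eq0; apply/eqP/setP => z; rewrite !inE.
apply/asboolP => -[zi /nonleafP[|u u_neq0 fuz]]; first exact: at_dist_in_tree zi.
have ui : at_dist n M u i.+2 by apply: (at_dist_child u_neq0); rewrite fuz.
by have := leq_trans (at_dist_le_height ui) le_mi; rewrite ltnn.
Qed.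

Lemma tree_w_neq0 i : (i < m)%N -> tree_w n M i <> 0%N.
Proof.
case: i => [|i] lt_im; first by rewrite tree_w0; move: lt_im; rewrite lt0n => /negbTE ->.
have [u /nonleaf_parent[fu_nonleaf fui]] := exists_at_dist i.+2 lt_im.
rewrite /tree_w /= => /card0_eq/(_ (f u)); rewrite inE => /asboolP; apply.
by split.
Qed.

(* Each of the conditions (i), (ii), (iii) is shown equivalent to this one. *)
Definition no_early_leaf :=
  forall z i, (i < m)%N -> at_dist n M z i -> ~ leaf n M z.

Lemma no_early_leaf_tree_vw :
  no_early_leaf <->
  (forall i, (i < m)%N -> tree_v n M i = tree_w n M i /\ tree_w n M i <> 0%N)
  /\ (forall i, (m <= i)%N -> tree_w n M i = 0%N).
Proof.
split=> [nel | [vw _] z [|i] lt_im zi].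
- split=> [i lt_im | ]; last exact: tree_w_eq0.
  split; last exact: tree_w_neq0.
  case: i lt_im => [|i] lt_im.
    by rewrite tree_v0 tree_w0; move: lt_im; rewrite lt0n => /negbTE ->.
  rewrite /tree_v /tree_w /=; apply: eq_card => z; rewrite !inE.
  by apply/asboolP/asboolP => [zi | [] //]; split=> //; apply: nel zi.
- by have /at_distP[/= -> _] := zi; apply: root_nonleaf.
- have [+ _] := vw _ lt_im; rewrite /tree_v /tree_w /=.
  set V := [set z | _]; set W := [set z | _] => card_VW.
  have W_sub_V : W \subset V.
    by apply/subsetP => y; rewrite !inE => /asboolP[yi _]; apply/asboolP.
  have /eqP W_V : W == V by rewrite eqEcard W_sub_V (eq_leq card_VW).
  have : z \in W by rewrite W_V inE; apply/asboolP.
  by rewrite inE => /asboolP[].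
Qed.

Lemma no_early_leaf_maximal :
  no_early_leaf <-> forall x j, maximal_pretail0 n M x j -> j = m.
Proof.
split=> [nel x j [/pretail0_at_dist xj not_extendable] | max_m z i lt_im zi z_leaf].
  apply/eqP; rewrite eqn_leq (at_dist_le_height xj) leqNgt; apply/negP => lt_jm.
  have [u u_neq0 fux] := (nonleafP x (at_dist_in_tree xj)).1 (nel x j lt_jm xj).
  apply: not_extendable; exists u, j.+1; split=> //.
    by apply/pretail0_at_dist/(at_dist_child u_neq0); rewrite fux.
  apply/subsetP => _ /imsetP[t _ ->]; apply/imsetP; exists (inord t.+1) => //.
  by rewrite inordK; [rewrite -fux -iterSr | rewrite ltnS; exact: ltn_ord].
move: lt_im; rewrite (max_m z i) ?ltnn //; split; first exact/pretail0_at_dist.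
move=> [x' [j' [/pretail0_at_dist /[dup] xj' /at_distP[_ x'N0] lt_ij' sub]]].
have /imsetP[[[|t] lt_t] _ /= zt] : z \in pretail_set n M x' j'.
  by apply: (subsetP sub); apply/imsetP; exists ord0.
  by apply: (x'N0 i lt_ij'); rewrite -zt; case/at_distP: zi.
move: z_leaf; apply/(nonleafP z (at_dist_in_tree zi)).
by exists (it t x'); [apply: x'N0 | rewrite zt].
Qed.

Lemma no_early_leaf_imset_kerM :
  no_early_leaf <-> forall i, (i < m)%N -> f @: kerM n M i.+1 = kerM n M i.
Proof.
split=> [nel i lt_im | img z i lt_im zi].
  apply/eqP; rewrite eqEsubset act_kerMS; apply/subsetP => y; rewrite mem_kerM => /eqP yi0.
  have [|i' yi'] := @in_tree_at_dist y; first by apply/in_treeP; exists i.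
  have lt_i'm : (i' < m)%N := leq_ltn_trans (at_dist_min i yi' yi0) lt_im.
  have [u u_neq0 fuy] := (nonleafP y (at_dist_in_tree yi')).1 (nel y i' lt_i'm yi').
  by apply/imsetP; exists u; rewrite // mem_kerM iterSr fuy yi0.
have /at_distP[zi0 _] := zi.
have /imsetP[u _ zu] : z \in f @: kerM n M i.+1 by rewrite img // mem_kerM zi0.
case: (eqVneq u 0) => [u0 | /eqP u_neq0].
  by rewrite zu u0 -[f 0]/(it 1 0) iter_act0; apply: root_nonleaf; apply: leq_ltn_trans lt_im.
by apply/(nonleafP _ (at_dist_in_tree zi)); exists u.
Qed.

Lemma no_early_leaf_card_kerM :
  no_early_leaf <->
  (forall i, (i < m)%N ->
     #|kerM n M i.+1| = (#|kerM n M 1| * #|kerM n M i|)%N /\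
     (#|kerM n M 1| * #|kerM n M i|)%N = (#|kerM n M 1| ^ i.+1)%N)
  /\ (forall j, #|kerM n M (m + j)| = #|kerM n M m|).
Proof.
split=> [nel | [card_kerS _]].
  have card_kerS i : (i < m)%N -> #|kerM n M i.+1| = (#|kerM n M 1| * #|kerM n M i|)%N.
    by move=> lt_im; apply/card_kerMS_imset; apply: (proj1 no_early_leaf_imset_kerM nel).
  split=> [i lt_im | j]; last by rewrite kerM_height.
  split; first exact: card_kerS.
  by rewrite -(card_kerS i lt_im); apply: (card_kerM_expn _ card_kerS).
apply/no_early_leaf_imset_kerM => i lt_im.
by apply/card_kerMS_imset; apply: (card_kerS i lt_im).1.
Qed.

End PretailTree.

Theorem lemma3p4 (n d : nat) (M : 'M[int]_d) (m : nat) :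
  (1 < n)%N ->
  tree_height n M m ->
  let cond_i := forall x j, maximal_pretail0 n M x j -> j = m in
  let cond_ii := (forall i, (i < m)%N -> tree_v n M i = tree_w n M i /\ tree_w n M i <> 0%N)
                 /\ (forall i, (m <= i)%N -> tree_w n M i = 0%N) in
  let cond_iii :=
    (forall i, (i < m)%N ->
       #|kerM n M i.+1| = (#|kerM n M 1| * #|kerM n M i|)%N /\
       (#|kerM n M 1| * #|kerM n M i|)%N = (#|kerM n M 1| ^ i.+1)%N)
    /\ (forall j, #|kerM n M (m + j)| = #|kerM n M m|) in
  [/\ (cond_i <-> cond_ii), (cond_ii <-> cond_iii),
      (exists k, (1 <= k)%N /\ mx_congr n (M ^+ (k + m)) (M ^+ m)),
      (forall m', (exists k, (1 <= k)%N /\ mx_congr n (M ^+ (k + m')) (M ^+ m')) ->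
                  (m <= m')%N)
    & (forall x j y, pretail n M x j y -> (j <= m)%N)].
Proof.
move=> n_gt1 height; cbv zeta.
have nel_i := no_early_leaf_maximal height.
have nel_ii := no_early_leaf_tree_vw height.
have nel_iii := no_early_leaf_card_kerM height.
split.
- exact: iff_trans (iff_sym nel_i) nel_ii.
- exact: iff_trans (iff_sym nel_ii) nel_iii.
- have [k k_gt0 Mkm] := eventually_periodic height.
  by exists k; split=> //; apply/mx_congrE.
- by move=> m' [k [k_gt0 /(mx_congrE _ _ n_gt1)]]; apply: height_le_preperiod.
- exact: pretail_le_height.
Qed.
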